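(* Let $\mathcal M$ be a class of uniformly discrete metric spaces which is stable under inclusion. Let $f:\mathcal X\to \mathcal Y$ be a Lipschitz map such that for all $R$, the family \[\{f^{-1}(A)\mid A\subset Y\in \mathcal Y, \diam(A)\leq R \}\in \mathcal D_0(\mathcal M).\] Then $\overline{\operatorname{asdim}}_{\mathcal M}(\mathcal X)\leq \operatorname{asdim}(\mathcal Y).$
   Context: Metric families are collections of $1$-uniformly discrete bounded geometry metric spaces. A class $\mathcal M$ of metric families is stable under inclusion if $\mathcal X\subset\mathcal Y\in\mathcal M$ implies $\mathcal X\in\mathcal M$. $\mathcal D_0(\mathcal M)$ is the class of families $\mathcal X$ such that for every $r$, there is $\mathcal Z\in\mathcal M$ such that every $X\in\mathcal X$ is a disjoint union of sets in $\mathcal Z$ pairwise at distance at least $r$. $\operatorname{asdim}(\mathcal Y)$ is the least $d$ such that for every $r$, each $Y\in\mathcal Y$ is $Y_0\cup\dots\cup Y_d$ with each $Y_i$ a union of pieces pairwise at distance $\geq r$, all pieces of uniformly bounded diameter. $\overline{\operatorname{asdim}}_{\mathcal M}(\mathcal X)$ is the least $d$ such that for every $r$ each $X\in\mathcal X$ is $X_0\cup\dots\cup X_d$ with each $X_i$ a union of pieces pairwise at distance $\geq r$, such that, with $\mathcal Z$ the family of pieces, $N^m_s(\mathcal Z)\in\mathcal M$ for all $m,s\ge1$; here $N^0_s(Z)=Z$ and $N^{k+1}_s(Z)$ is the union of all $Z'\in\mathcal Z$ meeting the closed $s$-neighbourhood of $N^k_s(Z)$. *)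

From Stdlib Require Import Reals List.
Open Scope R_scope.

(* A metric space: a carrier type with a real-valued distance.  The metric
   axioms are imposed separately (predicate [is_metric]). *)
Record mspace : Type := MSpace { pt : Type ; dist : pt -> pt -> R }.

Definition mfamily := mspace -> Prop.
Definition mclass := mfamily -> Prop.

Definition is_metric (X : mspace) : Prop :=
  (forall x y, 0 <= dist X x y) /\
  (forall x y, dist X x y = 0 <-> x = y) /\
  (forall x y, dist X x y = dist X y x) /\
  (forall x y z, dist X x z <= dist X x y + dist X y z).

Definition unif_discrete1 (X : mspace) : Prop :=
  forall x y, x <> y -> 1 <= dist X x y.

Definition bounded_geometry (X : mspace) : Prop :=
  forall r, exists N : nat, forall x, exists l : list (pt X),
    (length l <= N)%nat /\ forall y, dist X x y <= r -> In y l.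

Definition metric_family (F : mfamily) : Prop :=
  forall X, F X -> is_metric X /\ unif_discrete1 X /\ bounded_geometry X.

Definition subspace (X : mspace) (A : pt X -> Prop) : mspace :=
  MSpace {x : pt X | A x} (fun a b => dist X (proj1_sig a) (proj1_sig b)).

Definition isom_embeds (X Y : mspace) : Prop :=
  exists e : pt X -> pt Y, forall x y, dist Y (e x) (e y) = dist X x y.

Definition subfamily (F G : mfamily) : Prop :=
  forall X, F X -> exists Y, G Y /\ isom_embeds X Y.

Definition stable_under_inclusion (M : mclass) : Prop :=
  forall F G : mfamily, subfamily F G -> M G -> M F.

Definition set_dist_ge (X : mspace) (U V : pt X -> Prop) (r : R) : Prop :=
  forall x y, U x -> V y -> r <= dist X x y.

Definition sep_partition (X : mspace) (r : R) (I : Type) (U : I -> pt X -> Prop) : Prop :=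
  (forall x, exists i, U i x) /\
  (forall i j, i <> j -> (forall x, U i x -> U j x -> False) /\ set_dist_ge X (U i) (U j) r).

Definition D0 (M : mclass) (F : mfamily) : Prop :=
  forall r : R, exists Z : mfamily, M Z /\
    forall X, F X -> exists (I : Type) (U : I -> pt X -> Prop),
      sep_partition X r I U /\ forall i, Z (subspace X (U i)).

Definition coloured_cover (X : mspace) (d : nat) (r : R)
  (I : nat -> Type) (U : forall k, I k -> pt X -> Prop) : Prop :=
  (forall x, exists k, (k <= d)%nat /\ exists j : I k, U k j x) /\
  (forall k (j j' : I k), (k <= d)%nat -> j <> j' -> set_dist_ge X (U k j) (U k j') r).

Definition asdim_le (F : mfamily) (d : nat) : Prop :=
  forall r : R, exists D : R, forall Y, F Y ->
    exists (I : nat -> Type) (U : forall k, I k -> pt Y -> Prop),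
      coloured_cover Y d r I U /\
      forall k (j : I k) x y, (k <= d)%nat -> U k j x -> U k j y -> dist Y x y <= D.

Fixpoint Nbhd (X : mspace) (d : nat) (I : nat -> Type) (U : forall k, I k -> pt X -> Prop)
  (s : R) (Z : pt X -> Prop) (m : nat) : pt X -> Prop :=
  match m with
  | O => Z
  | S m' => fun x => exists k (j : I k), (k <= d)%nat /\ U k j x /\
              exists y, U k j y /\ exists z, Nbhd X d I U s Z m' z /\ dist X z y <= s
  end.

Definition Nfam (F : mfamily) (d : nat) (I : mspace -> nat -> Type)
  (U : forall X k, I X k -> pt X -> Prop) (m : nat) (s : R) : mfamily :=
  fun N => exists X, F X /\ exists k (j : I X k), (k <= d)%nat /\
             N = subspace X (Nbhd X d (I X) (U X) s (U X k j) m).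

Definition asdimM_le (M : mclass) (F : mfamily) (d : nat) : Prop :=
  forall r : R, exists (I : mspace -> nat -> Type) (U : forall X k, I X k -> pt X -> Prop),
    (forall X, F X -> coloured_cover X d r (I X) (U X)) /\
    forall (m : nat) (s : R), (1 <= m)%nat -> 1 <= s -> M (Nfam F d I U m s).

(* a map f : FX -> FY : each X in FX is sent to fY X in FY by f X *)
Definition lipschitz (FX : mfamily) (fY : mspace -> mspace) (f : forall X, pt X -> pt (fY X)) : Prop :=
  exists L : R, forall X, FX X -> forall x y,
    dist (fY X) (f X x) (f X y) <= L * dist X x y.

Definition preimage_family (FX : mfamily) (fY : mspace -> mspace)
  (f : forall X, pt X -> pt (fY X)) (Rd : R) : mfamily :=
  fun N => exists X, FX X /\ exists A : pt (fY X) -> Prop,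
    (forall a b, A a -> A b -> dist (fY X) a b <= Rd) /\
    N = subspace X (fun x => A (f X x)).

(* Fix r, a Lipschitz constant L > 0 of f, and covers of the spaces of FY witnessing
   asdim <= d at scale L r with pieces of diameter <= D.  On X take as pieces the r-chain
   components of the preimages of these pieces: two of them of the same colour are r apart,
   either as distinct components of one preimage or because their images are L r apart.
   For such a piece Z, N^m_s(Z) is chained at scale t = max(r, s), and its image has
   diameter at most 2 (D + m (D + L s)), so it lies in f^{-1}(A) with diam A bounded.
   A decomposition of f^{-1}(A) provided by D_0(M) at scale t + 1 cannot separate a
   t-chained set, so N^m_s(Z) embeds in one of its pieces; stability of M under
   inclusion concludes. *)

From Stdlib Require Import Reals Relations Classical FunctionalExtensionality
  PropExtensionality ProofIrrelevance ClassicalEpsilon Lra.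
Open Scope R_scope.

Definition step_invariant (X : mspace) (C : pt X -> Prop) (t : R) (P : pt X -> Prop) :=
  forall x y, C x -> C y -> dist X x y <= t -> (P x <-> P y).

(* Chain-connectedness at scale t, phrased without chains: a predicate that cannot change
   along a step of length <= t inside C is constant on C. *)
Definition chained (X : mspace) (C : pt X -> Prop) (t : R) :=
  forall P, step_invariant X C t P -> forall x y, C x -> C y -> P x -> P y.

Lemma step_invariant_sub X C C' t P :
  (forall x, C x -> C' x) -> step_invariant X C' t P -> step_invariant X C t P.
Proof. intros HCC' HP x y Cx Cy. apply HP; auto. Qed.

Lemma chained_le X C t t' : t <= t' -> chained X C t -> chained X C t'.
Proof.
  intros Htt' HC P HP. apply HC.
  intros x y Cx Cy Hxy. apply HP; auto. lra.
Qed.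

Definition edge (X : mspace) (S : pt X -> Prop) (t : R) (x y : pt X) : Prop :=
  S x /\ S y /\ dist X x y <= t.

Definition component (X : mspace) (S : pt X -> Prop) (t : R) (x0 y : pt X) : Prop :=
  S x0 /\ clos_refl_sym_trans _ (edge X S t) x0 y.

Lemma edge_closure_iff X S t x y :
  clos_refl_sym_trans _ (edge X S t) x y -> (S x <-> S y).
Proof. induction 1 as [x y [Sx [Sy _]] | | |]; tauto. Qed.

Lemma component_sub X S t x0 y : component X S t x0 y -> S y.
Proof. intros [Sx0 Hx0y]. apply (edge_closure_iff _ _ _ _ _ Hx0y), Sx0. Qed.

Lemma component_refl X S t x0 : S x0 -> component X S t x0 x0.
Proof. split; [assumption | apply rst_refl]. Qed.

Lemma component_closed X S t x0 y z :
  component X S t x0 y -> clos_refl_sym_trans _ (edge X S t) y z -> component X S t x0 z.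
Proof. intros [Sx0 Hx0y] Hyz. split; [assumption | now apply rst_trans with y]. Qed.

Lemma component_eq X S t x0 x1 a b :
  component X S t x0 a -> component X S t x1 b -> dist X a b <= t ->
  component X S t x0 = component X S t x1.
Proof.
  intros [Sx0 Hx0a] [Sx1 Hx1b] Hab.
  assert (Hx0x1 : clos_refl_sym_trans _ (edge X S t) x0 x1).
  { apply rst_trans with a; [assumption |].
    apply rst_trans with b; [| now apply rst_sym].
    apply rst_step. repeat split; [| | assumption].
    - exact (proj1 (edge_closure_iff _ _ _ _ _ Hx0a) Sx0).
    - exact (proj1 (edge_closure_iff _ _ _ _ _ Hx1b) Sx1). }
  apply functional_extensionality; intro y; apply propositional_extensionality.
  unfold component; split; intros [_ Hy]; split; try assumption.
  - apply rst_trans with x0; [now apply rst_sym | assumption].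
  - now apply rst_trans with x1.
Qed.

Lemma component_chained X S t x0 : chained X (component X S t x0) t.
Proof.
  intros P HP.
  assert (Hpath : forall y z, clos_refl_sym_trans _ (edge X S t) y z ->
            component X S t x0 y -> (P y <-> P z)).
  { induction 1 as [y z Hyz | y | z y Hzy IH | y w z Hyw IH1 Hwz IH2]; intros Hy.
    - apply HP; [assumption | | apply Hyz].
      apply component_closed with y; [assumption | now apply rst_step].
    - tauto.
    - symmetry. apply IH, component_closed with y; [assumption | now apply rst_sym].
    - rewrite (IH1 Hy). apply IH2, component_closed with y; assumption. }
  intros y z Hy Hz Py.
  apply (Hpath x0 z (proj2 Hz) (component_refl _ _ _ _ (proj1 Hz))).
  apply (Hpath x0 y (proj2 Hy) (component_refl _ _ _ _ (proj1 Hy))), Py.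
Qed.

(* Quantifying over all proofs of [W x] lets a point of C be mapped into the piece
   whatever membership proof it carries. *)
Definition in_piece (X : mspace) (W : pt X -> Prop) (I : Type)
  (U : I -> pt (subspace X W) -> Prop) (i : I) (x : pt X) : Prop :=
  forall u : pt (subspace X W), proj1_sig u = x -> U i u.

Lemma in_piece_of_mem X W I U i x (h : W x) :
  U i (exist _ x h) -> in_piece X W I U i x.
Proof.
  intros Hx [y h'] Hy. simpl in Hy. subst y.
  now rewrite (proof_irrelevance _ h' h).
Qed.

Lemma in_piece_step X W I U t t' i x y :
  sep_partition (subspace X W) t' I U -> t < t' -> W x ->
  (dist X x y <= t \/ dist X y x <= t) ->
  in_piece X W I U i x -> in_piece X W I U i y.
Proof.
  intros [Hcov Hsep] Htt' Wx Hxy Hx u Hu. subst y.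
  destruct (Hcov u) as [i' Hi'].
  destruct (classic (i = i')) as [<- | Hii']; [assumption |].
  exfalso.
  assert (Hx' := Hx (exist _ x Wx) eq_refl).
  assert (H1 := proj2 (Hsep i i' Hii') _ _ Hx' Hi').
  assert (H2 := proj2 (Hsep i' i (not_eq_sym Hii')) _ _ Hi' Hx').
  simpl in H1, H2. lra.
Qed.

Lemma chained_embeds_in_piece X W C t t' I U x0 :
  sep_partition (subspace X W) t' I U -> t < t' -> (forall x, C x -> W x) ->
  chained X C t -> C x0 ->
  exists i, isom_embeds (subspace X C) (subspace (subspace X W) (U i)).
Proof.
  intros Hpart Htt' HCW HC Cx0.
  destruct (proj1 Hpart (exist _ x0 (HCW x0 Cx0))) as [i Hi].
  assert (Hin : forall x, C x -> in_piece X W I U i x).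
  { intros x Cx. apply (HC (in_piece X W I U i)) with x0; auto.
    - intros a b Ca Cb Hab.
      split; apply in_piece_step with t t'; auto.
    - exact (in_piece_of_mem _ _ _ _ _ _ _ Hi). }
  exists i, (fun u : pt (subspace X C) =>
    let w : pt (subspace X W) := exist _ (proj1_sig u) (HCW _ (proj2_sig u)) in
    exist (U i) w (Hin _ (proj2_sig u) w eq_refl)).
  reflexivity.
Qed.

Section Neighbourhoods.
Variables (X : mspace) (d : nat) (I : nat -> Type) (U : forall k, I k -> pt X -> Prop)
  (s : R) (Z : pt X -> Prop).
Hypotheses (HX : is_metric X) (Hs : 0 <= s)
  (HZ : forall x, Z x -> exists k (j : I k), (k <= d)%nat /\ U k j x).

Notation N := (Nbhd X d I U s Z).

Lemma Nbhd_incl_succ m x : N m x -> N (S m) x.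
Proof.
  intros Hx.
  assert (Hpiece : exists k (j : I k), (k <= d)%nat /\ U k j x).
  { destruct m as [| m]; [now apply HZ |].
    destruct Hx as [k [j [Hk [Hj _]]]]. eauto. }
  destruct Hpiece as [k [j [Hk Hj]]].
  exists k, j; repeat split; try assumption.
  exists x; split; [assumption |]. exists x; split; [assumption |].
  destruct HX as [_ [Hdist0 _]]. now rewrite (proj2 (Hdist0 x x) eq_refl).
Qed.

Lemma Nbhd_incl_base m x : Z x -> N m x.
Proof. intros Zx. induction m as [| m IH]; [assumption | now apply Nbhd_incl_succ]. Qed.

Lemma Nbhd_chained t m :
  s <= t -> chained X Z t -> (forall k (j : I k), (k <= d)%nat -> chained X (U k j) t) ->
  chained X (N m) t.
Proof.
  intros Hst HZt HUt. induction m as [| m IH]; [assumption |].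
  intros P HP.
  assert (HPm : step_invariant X (N m) t P)
    by exact (step_invariant_sub _ _ _ _ _ (Nbhd_incl_succ m) HP).
  assert (Hdown : forall x, N (S m) x -> exists z, N m z /\ (P x <-> P z)).
  { intros x [k [j [Hk [Hx [y [Hy [z [Hz Hzy]]]]]]]].
    assert (Hsub : forall w, U k j w -> N (S m) w).
    { intros w Hw. exists k, j; repeat split; try assumption.
      exists y; split; [assumption |]. exists z; split; assumption. }
    assert (HPkj := step_invariant_sub _ _ _ _ _ Hsub HP).
    exists z; split; [assumption |].
    transitivity (P y).
    - split; apply (HUt k j Hk P HPkj); assumption.
    - symmetry. apply HP; [now apply Nbhd_incl_succ | now apply Hsub | lra]. }
  intros x x' Hx Hx' Px.
  destruct (Hdown x Hx) as [z [Hz Hxz]], (Hdown x' Hx') as [z' [Hz' Hxz']].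
  apply Hxz', (IH P HPm z z'); [assumption | assumption | now apply Hxz].
Qed.

Variables (Y : mspace) (g : pt X -> pt Y) (L D : R).
Hypotheses (HY : is_metric Y) (HL : 0 <= L)
  (Hg : forall x y, dist Y (g x) (g y) <= L * dist X x y)
  (HZD : forall x y, Z x -> Z y -> dist Y (g x) (g y) <= D)
  (HUD : forall k (j : I k) x y, (k <= d)%nat -> U k j x -> U k j y -> dist Y (g x) (g y) <= D).

Lemma Nbhd_image_dist m x x0 :
  N m x -> Z x0 -> dist Y (g x) (g x0) <= D + INR m * (D + L * s).
Proof.
  revert x. induction m as [| m IH]; intros x Hx Zx0.
  - simpl. rewrite Rmult_0_l, Rplus_0_r. now apply HZD.
  - destruct Hx as [k [j [Hk [Hx [y [Hy [z [Hz Hzy]]]]]]]].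
    destruct HY as [_ [_ [Hsym Htri]]].
    assert (Hxy := HUD k j x y Hk Hx Hy).
    assert (Hyz : dist Y (g y) (g z) <= L * s).
    { rewrite Hsym. eapply Rle_trans; [apply Hg |]. now apply Rmult_le_compat_l. }
    assert (Hzx0 := IH z Hz Zx0).
    assert (Htri3 := Rle_trans _ _ _ (Htri (g x) (g y) (g x0))
                       (Rplus_le_compat_l _ _ _ (Htri (g y) (g z) (g x0)))).
    rewrite S_INR. lra.
Qed.

Lemma Nbhd_image_diam m x y x0 :
  Z x0 -> N m x -> N m y -> dist Y (g x) (g y) <= 2 * (D + INR m * (D + L * s)).
Proof.
  intros Zx0 Hx Hy.
  assert (Hx0 := Nbhd_image_dist m x x0 Hx Zx0).
  assert (Hy0 := Nbhd_image_dist m y x0 Hy Zx0).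
  destruct HY as [_ [_ [Hsym Htri]]].
  assert (Htri' := Htri (g x) (g x0) (g y)). rewrite (Hsym (g x0)) in Htri'. lra.
Qed.

End Neighbourhoods.

Section Pullback.
Variables (FX : mfamily) (fY : mspace -> mspace) (f : forall X, pt X -> pt (fY X))
  (d : nat) (r L D : R) (IY : mspace -> nat -> Type)
  (UY : forall Y k, IY Y k -> pt Y -> Prop).
Hypotheses (HFX : metric_family FX) (HL : 0 < L)
  (Hlip : forall X, FX X -> forall x y, dist (fY X) (f X x) (f X y) <= L * dist X x y)
  (Hcover : forall X, FX X -> coloured_cover (fY X) d (L * r) (IY (fY X)) (UY (fY X)))
  (Hbounded : forall X, FX X -> forall k j a b, (k <= d)%nat ->
     UY (fY X) k j a -> UY (fY X) k j b -> dist (fY X) a b <= D).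

Definition preimage_piece X k (j : IY (fY X) k) : pt X -> Prop :=
  fun x => UY (fY X) k j (f X x).

(* Pieces are indexed by the sets themselves, so that a component reached from several
   base points is a single piece. *)
Definition piece_index X k : Type :=
  {P : pt X -> Prop | exists (j : IY (fY X) k) x0,
     preimage_piece X k j x0 /\ P = component X (preimage_piece X k j) r x0}.

Definition piece X k (P : piece_index X k) : pt X -> Prop := proj1_sig P.

Lemma piece_inhabited X k (P : piece_index X k) : exists x0, piece X k P x0.
Proof.
  destruct P as [P [j [x0 [Hx0 ->]]]]. exists x0. now apply component_refl.
Qed.

Lemma piece_chained X k (P : piece_index X k) : chained X (piece X k P) r.
Proof.
  destruct P as [P HP]; simpl. destruct HP as [j [x0 [_ ->]]]. apply component_chained.
Qed.

Lemma piece_image_bounded X k (P : piece_index X k) x y :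
  FX X -> (k <= d)%nat -> piece X k P x -> piece X k P y -> dist (fY X) (f X x) (f X y) <= D.
Proof.
  destruct P as [P HP]; simpl. destruct HP as [j [x0 [_ ->]]]. intros HX Hk Hx Hy.
  apply (Hbounded X HX k j);
    [assumption | exact (component_sub _ _ _ _ _ Hx) | exact (component_sub _ _ _ _ _ Hy)].
Qed.

Lemma piece_cover X : FX X -> coloured_cover X d r (piece_index X) (piece X).
Proof.
  intros HX. destruct (Hcover X HX) as [HYcov HYsep]. split.
  - intros x. destruct (HYcov (f X x)) as [k [Hk [j Hj]]].
    exists k; split; [assumption |].
    exists (exist _ (component X (preimage_piece X k j) r x)
              (ex_intro _ j (ex_intro _ x (conj Hj eq_refl)))).
    now apply component_refl.
  - intros k [P HP] [P' HP'] Hk HPP' a b Ha Hb. simpl in Ha, Hb.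
    assert (HneP : P <> P') by (intros E; apply HPP', subset_eq_compat, E).
    clear HPP'. destruct HP as [j [x0 [_ ->]]], HP' as [j' [x1 [_ ->]]].
    destruct (Rle_lt_dec r (dist X a b)) as [| Hab]; [assumption |]. exfalso.
    destruct (classic (j = j')) as [<- | Hjj'].
    + apply HneP. apply component_eq with a b; [assumption | assumption | lra].
    + assert (HfY := HYsep k j j' Hk Hjj' (f X a) (f X b)
                       (component_sub _ _ _ _ _ Ha) (component_sub _ _ _ _ _ Hb)).
      assert (Hfab := Hlip X HX a b).
      assert (L * dist X a b < L * r) by now apply Rmult_lt_compat_l.
      lra.
Qed.

Notation Npiece X k P s m := (Nbhd X d (piece_index X) (piece X) s (piece X k P) m).

Lemma piece_Nbhd_chained X k (P : piece_index X k) s m :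
  FX X -> (k <= d)%nat -> 0 <= s -> chained X (Npiece X k P s m) (Rmax r s).
Proof.
  intros HX Hk Hs.
  apply Nbhd_chained; [exact (proj1 (HFX X HX)) | assumption | eauto | apply Rmax_r | |].
  - apply (chained_le _ _ r); [apply Rmax_l | apply piece_chained].
  - intros k' j _. apply (chained_le _ _ r); [apply Rmax_l | apply piece_chained].
Qed.

Lemma piece_Nbhd_image_diam X k (P : piece_index X k) s m x y :
  FX X -> is_metric (fY X) -> (k <= d)%nat -> Npiece X k P s m x -> Npiece X k P s m y ->
  dist (fY X) (f X x) (f X y) <= 2 * (D + INR m * (D + L * s)).
Proof.
  intros HX HY Hk Hx Hy. destruct (piece_inhabited X k P) as [x0 Hx0].
  apply (Nbhd_image_diam X d (piece_index X) (piece X) s (piece X k P) (fY X) (f X) L D)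
    with x0; try assumption.
  - now apply Rlt_le.
  - now apply Hlip.
  - intros x' y'. now apply piece_image_bounded.
  - intros k' j x' y'. now apply piece_image_bounded.
Qed.

Variables (M : mclass) (FY : mfamily).
Hypotheses (HFY : metric_family FY) (HM : stable_under_inclusion M)
  (Hmap : forall X, FX X -> FY (fY X))
  (HD0 : forall Rd : R, D0 M (preimage_family FX fY f Rd)).

Lemma Nfam_piece_in_M m s : 0 <= s -> M (Nfam FX d piece_index piece m s).
Proof.
  intros Hs.
  set (rho := D + INR m * (D + L * s)).
  destruct (HD0 (2 * rho) (Rmax r s + 1)) as [Zf [HZf HZf_part]].
  apply HM with Zf; [| assumption].
  intros N [X [HX [k [P [Hk ->]]]]].
  set (A := fun a => exists x, Npiece X k P s m x /\ a = f X x).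
  assert (Hpre : preimage_family FX fY f (2 * rho) (subspace X (fun x => A (f X x)))).
  { exists X; split; [assumption |]. exists A; split; [| reflexivity].
    intros a b [x [Hx ->]] [y [Hy ->]].
    apply (piece_Nbhd_image_diam X k P); try assumption.
    exact (proj1 (HFY _ (Hmap X HX))). }
  destruct (HZf_part _ Hpre) as [I' [U' [Hpart HU']]].
  destruct (piece_inhabited X k P) as [x0 Hx0].
  destruct (chained_embeds_in_piece X _ (Npiece X k P s m) (Rmax r s) _ I' U' x0 Hpart)
    as [i Hi].
  - lra.
  - intros x Hx. now exists x.
  - now apply piece_Nbhd_chained.
  - apply Nbhd_incl_base; [exact (proj1 (HFX X HX)) | assumption | eauto | assumption].
  - exists (subspace (subspace X (fun x => A (f X x))) (U' i)). split; [apply HU' | assumption].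
Qed.

End Pullback.

Lemma lipschitz_pos FX fY f :
  metric_family FX -> lipschitz FX fY f ->
  exists L, 0 < L /\ forall X, FX X -> forall x y, dist (fY X) (f X x) (f X y) <= L * dist X x y.
Proof.
  intros HFX [L0 HL0]. exists (Rabs L0 + 1). split; [pose proof (Rabs_pos L0); lra |].
  intros X HX x y. eapply Rle_trans; [now apply HL0 |].
  apply Rmult_le_compat_r; [apply (proj1 (HFX X HX)) |].
  pose proof (Rle_abs L0). lra.
Qed.

Lemma asdim_le_choice FY d :
  asdim_le FY d -> forall r, exists D (I : mspace -> nat -> Type)
    (U : forall Y k, I Y k -> pt Y -> Prop), forall Y, FY Y ->
    coloured_cover Y d r (I Y) (U Y) /\
    forall k j a b, (k <= d)%nat -> U Y k j a -> U Y k j b -> dist Y a b <= D.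
Proof.
  intros Had r. destruct (Had r) as [D HD]. exists D.
  assert (Hchoice : forall Y, {c : {I : nat -> Type & forall k, I k -> pt Y -> Prop} |
     FY Y -> coloured_cover Y d r (projT1 c) (projT2 c) /\
       forall k j a b, (k <= d)%nat -> projT2 c k j a -> projT2 c k j b -> dist Y a b <= D}).
  { intros Y. apply constructive_indefinite_description.
    destruct (classic (FY Y)) as [HY | HY].
    - destruct (HD Y HY) as [I [U HIU]]. now exists (existT _ I U).
    - exists (existT (fun I : nat -> Type => forall k, I k -> pt Y -> Prop)
                (fun _ => Empty_set) (fun _ _ _ => False)).
      now intros. }
  exists (fun Y => projT1 (proj1_sig (Hchoice Y))), (fun Y => projT2 (proj1_sig (Hchoice Y))).
  intros Y HY. exact (proj2_sig (Hchoice Y) HY).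
Qed.

Theorem proposition2p6 (M : mclass) (FX FY : mfamily) (fY : mspace -> mspace)
  (f : forall X, pt X -> pt (fY X)) :
  metric_family FX -> metric_family FY ->
  stable_under_inclusion M ->
  (forall X, FX X -> FY (fY X)) ->
  lipschitz FX fY f ->
  (forall Rd : R, D0 M (preimage_family FX fY f Rd)) ->
  forall d : nat, asdim_le FY d -> asdimM_le M FX d.
Proof.
  intros HFX HFY HM Hmap Hlip HD0 d Had r.
  destruct (lipschitz_pos FX fY f HFX Hlip) as [L [HL HfL]].
  destruct (asdim_le_choice FY d Had (L * r)) as [D [IY [UY HUY]]].
  exists (piece_index fY f r IY UY), (piece fY f r IY UY). split.
  - intros X HX. apply (piece_cover FX fY f d r L IY UY); try assumption.
    intros X' HX'. exact (proj1 (HUY _ (Hmap X' HX'))).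
  - intros m s _ Hs. apply (Nfam_piece_in_M FX fY f d r L D IY UY) with FY; try assumption.
    + intros X' HX'. exact (proj2 (HUY _ (Hmap X' HX'))).
    + lra.
Qed.
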